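(* Let $h$ be a bilinear form on $V$. Then: (1) for $0\leq p\leq n$, $*\Big(\frac{g^{n-p}h^p}{(n-p)!\,p!}\Big)=i_{\frac{h^p}{p!}}\Big(\frac{g^p}{p!}\Big)$; (2) for $0\leq p\leq n-1$, $*\Big(\frac{g^{n-p-1}h^p}{(n-p-1)!\,p!}\Big)=i_{\frac{h^p}{p!}}\Big(\frac{g^{p+1}}{(p+1)!}\Big)$; (3) more generally, for integers $r\geq 0$ and $0\leq p\leq n-r$, $*\Big(\frac{g^{n-p-r}h^p}{(n-p-r)!\,p!}\Big)=i_{\frac{h^p}{p!}}\Big(\frac{g^{p+r}}{(p+r)!}\Big)$.
   Context: $(V,g)$ is an oriented Euclidean real vector space of dimension $n$. Double forms: elements of $\bigoplus_{p,q}\Lambda^pV^*\otimes\Lambda^qV^*$, a $(p,q)$ double form viewed as a bilinear form on $\Lambda^pV\times\Lambda^qV$, with the inner product induced by $g$ (for an orthonormal basis, the $e_I^*\otimes e_J^*$ with strictly increasing multi-indices are orthonormal). Exterior product: $(\theta_1\otimes\theta_2)(\theta_3\otimes\theta_4)=(\theta_1\wedge\theta_3)\otimes(\theta_2\wedge\theta_4)$; $g$ and $h$ are $(1,1)$ double forms and powers are for this product ($h^0=g^0=1$). $i_\psi$ is the adjoint of left exterior multiplication by $\psi$. The double Hodge star sends a $(p,q)$ double form $\omega$ to the $(n-p,n-q)$ double form $*\omega(u_1,u_2)=(-1)^{(p+q)(n-p-q)}\omega( *u_1,*u_2)$, with $*$ the usual Hodge star of $\Lambda V$. *)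

(* Double forms on an oriented Euclidean space V of dim n,
   written in coordinates w.r.t. a fixed positively oriented orthonormal
   basis e_0,...,e_{n-1}.  A double form is the family of its coefficients
   w(I,J) on the orthonormal basis e_I^* (x) e_J^* (I, J subsets of 'I_n,
   i.e. strictly increasing multi-indices), so w(I,J) = w(e_I, e_J). *)
From HB Require Import structures.
From mathcomp Require Import all_boot all_order all_algebra.
Set Implicit Arguments. Unset Strict Implicit. Unset Printing Implicit Defensive.
Import Order.TTheory GRing.Theory Num.Theory.
Local Open Scope ring_scope.

Notation dform n R := {ffun {set 'I_n} * {set 'I_n} -> R}.

Section DoubleForms.
Variables (R : fieldType) (n : nat).

(* sign of e_I /\ e_K = sgnp I K e_{I u K}  (I, K disjoint) *)
Definition sgnp (I K : {set 'I_n}) : R :=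
  (-1) ^+ #|[set x : 'I_n * 'I_n | [&& x.1 \in I, x.2 \in K & (val x.2 < val x.1)%N]]|.

Definition dscale (k : R) (w : dform n R) : dform n R :=
  [ffun AB : {set 'I_n} * {set 'I_n} => k * w AB].

Definition dbasis (K L : {set 'I_n}) : dform n R := [ffun AB : {set 'I_n} * {set 'I_n} => (AB == (K, L))%:R].

(* exterior product of double forms:
   (t1 (x) t2)(t3 (x) t4) = (t1 /\ t3) (x) (t2 /\ t4) *)
Definition dmul (w t : dform n R) : dform n R :=
  [ffun AB : {set 'I_n} * {set 'I_n} => \sum_(I : {set 'I_n} | I \subset AB.1)
              \sum_(J : {set 'I_n} | J \subset AB.2)
      sgnp I (AB.1 :\: I) * sgnp J (AB.2 :\: J) * w (I, J) * t (AB.1 :\: I, AB.2 :\: J)].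

Definition done : dform n R := dbasis set0 set0.

Definition dpow (w : dform n R) (p : nat) : dform n R := iter p (dmul w) done.

Definition gform : dform n R := \sum_(i < n) dbasis [set i] [set i].

(* the (1,1) double form of a bilinear form h, h i j = h(e_i, e_j) *)
Definition hform (h : 'M[R]_n) : dform n R :=
  \sum_(i < n) \sum_(j < n) dscale (h i j) (dbasis [set i] [set j]).

(* inner product induced by g: the e_I^* (x) e_J^* are orthonormal *)
Definition ddot (w t : dform n R) : R := \sum_(AB : {set 'I_n} * {set 'I_n}) w AB * t AB.

(* i_psi = adjoint of left exterior multiplication by psi *)
Definition dint (psi w : dform n R) : dform n R :=
  [ffun KL : {set 'I_n} * {set 'I_n} => ddot w (dmul psi (dbasis KL.1 KL.2))].

Definition hsign (p q : nat) : R :=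
  exprz (-1) ((p%:Z + q%:Z) * (n%:Z - p%:Z - q%:Z)).

(* double Hodge star, applied componentwise: for a (p,q) component,
   ( *w)(e_K, e_L) = (-1)^{(p+q)(n-p-q)} w( *e_K, *e_L ),
   with *e_K = sgnp K (~: K) e_{~: K}  (p = |~:K|, q = |~:L|). *)
Definition dstar (w : dform n R) : dform n R :=
  [ffun KL : {set 'I_n} * {set 'I_n} => hsign #|~: KL.1| #|~: KL.2|
              * sgnp KL.1 (~: KL.1) * sgnp KL.2 (~: KL.2) * w (~: KL.1, ~: KL.2)].

End DoubleForms.

(** Products of diagonal forms are diagonal, with weights multiplied by
    subset convolution, so [g^k / k!] is the diagonal form with weight
    [#|I| = k].  Hence both [*(g^k Phi / k!)] and [i_Phi (g^m / m!)], for
    [k + m = n], have at [(e_K, e_L)] a coefficient of the form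
    [\sum_(A | K, L \subset A, #|A| = m) +-Phi(A \ K, A \ L)].  When [Phi] has
    bidegree [(p, p)] only terms with [#|K| = #|L|] survive.  For those the
    Hodge sign is [1], and the permutation signs agree term by term: moving
    [e_K] past [e_(~K)] and [e_L] past [e_(~L)] costs the same sign twice. *)
From mathcomp Require Import all_boot all_order all_algebra ring zify.
Set Implicit Arguments. Unset Strict Implicit. Unset Printing Implicit Defensive.
Import Order.TTheory GRing.Theory Num.Theory.
Local Open Scope ring_scope.

Section DoubleForms.
Variables (R : numFieldType) (n : nat).
Implicit Types (A I J K L X Y Z : {set 'I_n}) (w t Phi : dform n R).
Local Notation sgn := (sgnp R).
Local Notation g := (gform R n).

Definition inversions X Y :=
  [set x : 'I_n * 'I_n | [&& x.1 \in X, x.2 \in Y & (val x.2 < val x.1)%N]].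

Lemma sgnpE X Y : sgn X Y = (-1) ^+ #|inversions X Y|.
Proof. by []. Qed.

Lemma sgnp_mulss X Y : sgn X Y * sgn X Y = 1.
Proof. by rewrite -expr2 sqrr_sign. Qed.

Lemma sgnpUr X Y Z : [disjoint Y & Z] -> sgn X (Y :|: Z) = sgn X Y * sgn X Z.
Proof.
move=> dYZ; rewrite !sgnpE -exprD.
have -> : inversions X (Y :|: Z) = inversions X Y :|: inversions X Z.
  apply/setP => x; rewrite /inversions !inE.
  by case: (x.1 \in X); case: (x.2 \in Y); case: (x.2 \in Z); case: (_ < _)%N.
rewrite -cardsUI.
suff -> : inversions X Y :&: inversions X Z = set0 by rewrite cards0 addn0.
apply/setP => x; rewrite /inversions !inE; case Yx: (x.2 \in Y); rewrite ?andbF //=.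
by rewrite (disjointFr dYZ Yx) !andbF.
Qed.

Lemma sgnpC X Y : [disjoint X & Y] -> sgn X Y * sgn Y X = (-1) ^+ (#|X| * #|Y|).
Proof.
move=> dXY; rewrite !sgnpE -exprD.
pose swap (x : 'I_n * 'I_n) := (x.2, x.1).
have swap_inj : injective swap by move=> [a b] [c d] [-> ->].
rewrite -(card_preimset (inversions Y X) swap_inj) -cardsX -cardsUI.
have -> : inversions X Y :&: swap @^-1: inversions Y X = set0.
  by apply/setP => x; rewrite /inversions !inE /=; case: ltngtP; rewrite ?andbF.
rewrite cards0 addn0.
suff -> : inversions X Y :|: swap @^-1: inversions Y X = setX X Y by [].
apply/setP => x; rewrite /inversions !inE /=.
case Xx: (x.1 \in X); case Yx: (x.2 \in Y); rewrite ?andbF //=.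
case: ltngtP => // /val_inj eqx.
by move: (disjointFr dXY Xx); rewrite -eqx Yx.
Qed.

Lemma setD_setC A K : ~: K :\: ~: A = A :\: K.
Proof. by rewrite !setDE setCK setIC. Qed.

Lemma setDDS X K : K \subset X -> X :\: (X :\: K) = K.
Proof. by move=> KX; rewrite setDDr setDv set0U; apply/setIidPr. Qed.

(* Both sides are the sign of [e_K /\ e_(~A) /\ e_(A \ K)]: split [~K] as
   [~A :|: A \ K], or move [e_K] to the end and merge [(A \ K) :|: K = A]. *)
Lemma sgnp_setC_split A K : K \subset A ->
  sgn K (~: K) * sgn (~: A) (A :\: K)
  = (-1) ^+ (#|K| * #|~: K|) * sgn (~: A) A * sgn (A :\: K) K.
Proof.
move=> KA.
have dCD : [disjoint ~: A & A :\: K].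
  by rewrite disjoint_sym disjoints_subset setCK subsetDl.
have dDK : [disjoint A :\: K & K] by rewrite disjoints_subset setDE subsetIr.
have dKD : [disjoint K & A :\: K] by rewrite disjoint_sym.
have dKC : [disjoint K & ~: A] by rewrite disjoints_subset setCK.
have eCK : ~: K = ~: A :|: A :\: K.
  apply/setP => x; rewrite !inE; case Kx: (x \in K) => /=.
    by rewrite (subsetP KA _ Kx).
  by case: (x \in A).
have eA : A = A :\: K :|: K.
  by rewrite setUC setDE setUIr setUCr setIT; apply/esym/setUidPr.
have cCK : #|~: K| = (#|~: A| + #|A :\: K|)%N.
  have := subset_leq_card KA; have := cardsC K; have := cardsC A.
  by rewrite (cardsDS KA) card_ord; lia.
have eCA : sgn (~: A) A = sgn (~: A) (A :\: K) * sgn (~: A) K.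
  by rewrite -(sgnpUr _ dDK) -eA.
rewrite {1}eCK (sgnpUr _ dCD) eCA cCK mulnDr exprD -(sgnpC dKC) -(sgnpC dKD).
transitivity (sgn K (~: A) * sgn K (A :\: K) * sgn (~: A) (A :\: K)
  * (sgn (~: A) K * sgn (~: A) K) * (sgn (A :\: K) K * sgn (A :\: K) K)).
  by rewrite !sgnp_mulss !mulr1.
ring.
Qed.

Lemma sgnp_dstar_term A K L : K \subset A -> L \subset A -> #|K| = #|L| ->
  sgn K (~: K) * sgn L (~: L) * (sgn (~: A) (A :\: K) * sgn (~: A) (A :\: L))
  = sgn (A :\: K) K * sgn (A :\: L) L.
Proof.
move=> KA LA cKL.
have cCKL : #|~: K| = #|~: L| by have := cardsC K; have := cardsC L; lia.
rewrite mulrACA (sgnp_setC_split KA) (sgnp_setC_split LA) cCKL cKL.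
set s := (-1) ^+ _; set sA := sgn (~: A) A.
transitivity ((s * s) * (sA * sA) * (sgn (A :\: K) K * sgn (A :\: L) L)); first by ring.
by rewrite -expr2 sqrr_sign sgnp_mulss !mul1r.
Qed.

Lemma hsign_diag p : hsign R n p p = 1.
Proof.
rewrite /hsign.
have -> : (p%:Z + p%:Z) * (n%:Z - p%:Z - p%:Z) = 2%:Z * (p%:Z * (n%:Z - p%:Z - p%:Z)).
  by ring.
by rewrite -exprz_exp -exprnP sqrrN expr1n exp1rz.
Qed.

Lemma sum_delta (T : finType) (P : pred T) (a : T) (F : T -> R) :
  \sum_(i | P i) (a == i)%:R * F i = if P a then F a else 0.
Proof.
rewrite big_mkcond (bigD1 a) //= big1 => [|i /negbTE nia]; last first.
  by rewrite eq_sym nia mul0r if_same.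
by rewrite eqxx mul1r addr0.
Qed.

Lemma setD_eqE Y J L : J \subset Y ->
  (Y :\: J == L) = (L \subset Y) && (Y :\: L == J).
Proof.
move=> JY; apply/eqP/andP => [<-|[LY /eqP <-]]; last exact: setDDS.
by rewrite subsetDl setDDS.
Qed.

Lemma sum_setD_eq Y L (F : {set 'I_n} -> R) :
  \sum_(J : {set 'I_n} | J \subset Y) (Y :\: J == L)%:R * F J
  = if L \subset Y then F (Y :\: L) else 0.
Proof.
transitivity (\sum_(J : {set 'I_n} | J \subset Y)
  (Y :\: L == J)%:R * ((L \subset Y)%:R * F J)).
  apply: eq_bigr => J JY; rewrite (setD_eqE L JY).
  by case: (L \subset Y); case: (_ == J); rewrite /= ?mul1r ?mul0r.
by rewrite sum_delta subsetDl; case: (L \subset Y); rewrite ?mul1r ?mul0r.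
Qed.

Definition ddiag (d : {set 'I_n} -> R) : dform n R :=
  [ffun AB : {set 'I_n} * {set 'I_n} => (AB.1 == AB.2)%:R * d AB.1].

Lemma dmul_ddiagl d w X Y :
  dmul (ddiag d) w (X, Y) = \sum_(I : {set 'I_n} | (I \subset X) && (I \subset Y))
    sgn I (X :\: I) * sgn I (Y :\: I) * d I * w (X :\: I, Y :\: I).
Proof.
rewrite ffunE big_mkcondr /=; apply: eq_bigr => I _.
transitivity (\sum_(J : {set 'I_n} | J \subset Y) (I == J)%:R *
  (sgn J (X :\: J) * sgn J (Y :\: J) * d J * w (X :\: J, Y :\: J))).
  apply: eq_bigr => J _; rewrite ffunE /=.
  by case: eqP => [<-|_]; rewrite !(mul1r, mul0r, mulr0).
by rewrite sum_delta.
Qed.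

Lemma dmul_dbasisr w K L X Y :
  dmul w (dbasis R K L) (X, Y) =
  if (K \subset X) && (L \subset Y)
  then sgn (X :\: K) K * sgn (Y :\: L) L * w (X :\: K, Y :\: L) else 0.
Proof.
rewrite ffunE /=.
transitivity (\sum_(I : {set 'I_n} | I \subset X) (X :\: I == K)%:R *
  \sum_(J : {set 'I_n} | J \subset Y)
    (Y :\: J == L)%:R * (sgn I (X :\: I) * sgn J (Y :\: J) * w (I, J))).
  apply: eq_bigr => I _; rewrite mulr_sumr; apply: eq_bigr => J _.
  by rewrite ffunE xpair_eqE -mulnb natrM /=; ring.
under eq_bigr => I _ do
  rewrite (sum_setD_eq Y L (fun J => sgn I (X :\: I) * sgn J (Y :\: J) * w (I, J))).
rewrite (sum_setD_eq X K (fun I => if L \subset Y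
  then sgn I (X :\: I) * sgn (Y :\: L) (Y :\: (Y :\: L)) * w (I, Y :\: L) else 0)).
by case: (boolP (K \subset X)) => KX; case: (boolP (L \subset Y)) => LY;
  rewrite /= ?setDDS.
Qed.

Lemma ddot_ddiagl d t : ddot (ddiag d) t = \sum_A d A * t (A, A).
Proof.
transitivity (\sum_A \sum_(B : {set 'I_n}) ddiag d (A, B) * t (A, B)).
  by rewrite /ddot pair_bigA; apply: eq_bigr => -[].
apply: eq_bigr => A _.
rewrite (bigD1 A) //= big1 => [|B nBA]; first by rewrite ffunE eqxx mul1r addr0.
by rewrite ffunE /= eq_sym (negbTE nBA) !mul0r.
Qed.

Lemma dmul_ddiag d e : dmul (ddiag d) (ddiag e)
  = ddiag (fun X => \sum_(I : {set 'I_n} | I \subset X) d I * e (X :\: I)).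
Proof.
apply/ffunP => -[X Y]; rewrite dmul_ddiagl [RHS]ffunE /=.
case: (eqVneq X Y) => [<-|nXY].
  rewrite mul1r (eq_bigl (fun I => I \subset X)) => [|I]; last by rewrite andbb.
  apply: eq_bigr => I _; rewrite ffunE /= eqxx mul1r.
  transitivity (sgn I (X :\: I) * sgn I (X :\: I) * (d I * e (X :\: I))); first by ring.
  by rewrite sgnp_mulss mul1r.
rewrite mul0r big1 // => I /andP[IX IY].
have eq_setD : (X :\: I == Y :\: I) = (X == Y).
  apply/eqP/eqP => [eXY|-> //].
  by rewrite -(setID X I) -(setID Y I) (setIidPr IX) (setIidPr IY) eXY.
by rewrite ffunE /= eq_setD (negbTE nXY) mul0r mulr0.
Qed.

Lemma gform_ddiag : g = ddiag (fun I => (#|I| == 1%N)%:R).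
Proof.
apply/ffunP => -[I J]; rewrite sum_ffunE ffunE /=.
have [/eqP/cards1P[i ->]|nI1] := eqVneq #|I| 1%N.
  rewrite (bigD1 i) //= big1 => [|j nji]; last first.
    by rewrite ffunE xpair_eqE (inj_eq set1_inj) eq_sym (negbTE nji).
  by rewrite ffunE xpair_eqE eqxx addr0 mulr1 eq_sym.
rewrite mulr0 big1 // => j _; rewrite ffunE xpair_eqE.
by case: eqP => [eI|] //=; rewrite eI cards1 eqxx in nI1.
Qed.

Lemma sum_card1_subset X :
  \sum_(I : {set 'I_n} | I \subset X) (#|I| == 1%N)%:R = #|X|%:R :> R.
Proof.
rewrite -[#|X|]bin1 -cards_draws -sumr_const big_mkcond [RHS]big_mkcond.
by apply: eq_bigr => I _; rewrite inE; case: (I \subset X); case: (_ == _).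
Qed.

Lemma gpow_ddiag k : dpow g k = ddiag (fun I => k`!%:R * (#|I| == k)%:R).
Proof.
elim: k => [|k IHk].
  apply/ffunP => -[I J]; rewrite !ffunE /= xpair_eqE mul1r cards_eq0.
  by case: (eqVneq I set0) => [->|_]; rewrite /= ?mulr1 ?mulr0 // eq_sym.
rewrite /dpow iterS -/(dpow g k) IHk gform_ddiag dmul_ddiag.
apply/ffunP => -[X Y]; rewrite !ffunE /=; congr (_ * _).
transitivity (\sum_(I : {set 'I_n} | I \subset X)
  (k`!%:R : R) * (#|X| == k.+1)%:R * (#|I| == 1%N)%:R).
  apply: eq_bigr => I IX; rewrite (cardsDS IX) mulrC.
  have [I1|] := eqVneq #|I| 1%N; last by rewrite !mulr0.
  have X_gt0 : (0 < #|X|)%N by rewrite -I1 subset_leq_card.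
  by rewrite I1 !mulr1; congr (_ * _%:R); apply/eqP/eqP; lia.
rewrite -big_distrr /= sum_card1_subset factS natrM.
have [->|_] := eqVneq #|X| k.+1; last by rewrite !mulr0 mul0r.
by rewrite !mulr1 mulrC.
Qed.

(* [g^k / k!], the identity of [Lambda^k V] read as a [(k, k)] double form. *)
Definition dunit k : dform n R := ddiag (fun I => (#|I| == k)%:R).

Lemma dscale_gpow k : dscale (k`!%:R^-1) (dpow g k) = dunit k.
Proof.
apply/ffunP => AB; rewrite !ffunE gpow_ddiag ffunE mulrCA mulKf //.
by rewrite pnatr_eq0 -lt0n fact_gt0.
Qed.

Lemma dscaleA a b w : dscale a (dscale b w) = dscale (a * b) w.
Proof. by apply/ffunP => AB; rewrite !ffunE mulrA. Qed.

Lemma dmulZl a w t : dmul (dscale a w) t = dscale a (dmul w t).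
Proof.
apply/ffunP => AB; rewrite !ffunE mulr_sumr; apply: eq_bigr => I _.
by rewrite mulr_sumr; apply: eq_bigr => J _; rewrite ffunE; ring.
Qed.

Lemma dmulZr a w t : dmul w (dscale a t) = dscale a (dmul w t).
Proof.
apply/ffunP => AB; rewrite !ffunE mulr_sumr; apply: eq_bigr => I _.
by rewrite mulr_sumr; apply: eq_bigr => J _; rewrite ffunE; ring.
Qed.

Definition homogeneous p q w := forall I J, w (I, J) != 0 -> #|I| = p /\ #|J| = q.

Lemma homogeneous_dscale p q a w : homogeneous p q w -> homogeneous p q (dscale a w).
Proof. by move=> hw I J; rewrite ffunE mulf_eq0 negb_or => /andP[_ /hw]. Qed.

Lemma homogeneous_dmul p q p' q' w t : homogeneous p q w -> homogeneous p' q' t ->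
  homogeneous (p + p') (q + q') (dmul w t).
Proof.
move=> hw ht X Y.
have [/andP[/eqP -> /eqP ->] //|nXY] := boolP ((#|X| == p + p') && (#|Y| == q + q')).
rewrite ffunE big1 ?eqxx // => I IX; rewrite big1 // => J JY.
have [/eqP ->|/hw[cI cJ]] := boolP (w (I, J) == 0); first by rewrite mulr0 mul0r.
have [/eqP ->|/ht[cXI cYJ]] := boolP (t (X :\: I, Y :\: J) == 0); first by rewrite mulr0.
move: nXY; rewrite -(cardsID I X) -(cardsID J Y) (setIidPr IX) (setIidPr JY).
by rewrite cI cJ cXI cYJ !eqxx.
Qed.

Lemma homogeneous_done : homogeneous 0 0 (done R n).
Proof.
move=> I J; rewrite ffunE xpair_eqE.
by case: (eqVneq I set0) => [->|_]; case: (eqVneq J set0) => [->|_];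
  rewrite ?cards0 /= ?andbF ?eqxx.
Qed.

Lemma homogeneous_dpow p q w k : homogeneous p q w ->
  homogeneous (p * k) (q * k) (dpow w k).
Proof.
move=> hw; elim: k => [|k IHk]; first by rewrite !muln0; exact: homogeneous_done.
by rewrite !mulnS; exact: homogeneous_dmul.
Qed.

Lemma homogeneous_hform (h : 'M[R]_n) : homogeneous 1 1 (hform h).
Proof.
move=> I J.
have [/andP[/eqP -> /eqP ->] //|nIJ] := boolP ((#|I| == 1%N) && (#|J| == 1%N)).
rewrite sum_ffunE big1 ?eqxx // => i _; rewrite sum_ffunE big1 // => j _.
rewrite !ffunE xpair_eqE.
case: (eqVneq I [set i]) => [eI|_]; case: (eqVneq J [set j]) => [eJ|_];
  rewrite /= ?andbF ?mulr0 //.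
by rewrite eI eJ !cards1 in nIJ.
Qed.

Lemma dstar_dmul_dunit p k m Phi : homogeneous p p Phi -> (k + m)%N = n ->
  dstar (dmul (dunit k) Phi) = dint Phi (dunit m).
Proof.
move=> hPhi kmn; apply/ffunP => -[K L].
rewrite [LHS]ffunE [RHS]ffunE /= /dunit dmul_ddiagl ddot_ddiagl.
rewrite (reindex_inj (@setC_inj _)) /=.
rewrite (eq_bigl (fun A => (K \subset A) && (L \subset A))) => [|A]; last by rewrite !setCS.
rewrite mulr_sumr big_mkcond; apply: eq_bigr => A _; rewrite dmul_dbasisr !setD_setC.
case: ifP => [/andP[KA LA]|_]; last by rewrite mulr0.
have -> : (#|~: A| == k) = (#|A| == m).
  by have := cardsC A; rewrite card_ord => cA; apply/eqP/eqP; lia.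
have [/eqP ->|/hPhi[cAK cAL]] := boolP (Phi (A :\: K, A :\: L) == 0).
  by rewrite !mulr0.
have cKL : #|K| = #|L|.
  move: cAK cAL; rewrite !cardsDS //.
  by have := subset_leq_card KA; have := subset_leq_card LA; lia.
have -> : #|~: L| = #|~: K| by have := cardsC K; have := cardsC L; lia.
rewrite hsign_diag mul1r -(sgnp_dstar_term KA LA cKL); ring.
Qed.

Lemma dstar_gpow_hpow (h : 'M[R]_n) p k m : (k + m)%N = n ->
  dstar (dscale ((k`! * p`!)%:R^-1) (dmul (dpow g k) (dpow (hform h) p)))
  = dint (dscale (p`!%:R^-1) (dpow (hform h) p)) (dscale (m`!%:R^-1) (dpow g m)).
Proof.
move=> kmn; rewrite natrM invfM -dscaleA -dmulZr -dmulZl !dscale_gpow.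
apply: (dstar_dmul_dunit _ kmn); apply: homogeneous_dscale.
by move: (@homogeneous_dpow 1 1 _ p (@homogeneous_hform h)); rewrite mul1n; apply.
Qed.

End DoubleForms.

Theorem mainTheorem12 (R : realFieldType) (n : nat) (h : 'M[R]_n) :
  let g := gform R n in
  let H := hform h in
  (forall p : nat, (p <= n)%N ->
     dstar (dscale (((n - p)`! * p`!)%:R^-1) (dmul (dpow g (n - p)) (dpow H p)))
     = dint (dscale (p`!%:R^-1) (dpow H p)) (dscale (p`!%:R^-1) (dpow g p)))
  /\
  (forall p : nat, (p <= n - 1)%N -> (0 < n)%N ->
     dstar (dscale (((n - p - 1)`! * p`!)%:R^-1)
                   (dmul (dpow g (n - p - 1)) (dpow H p)))
     = dint (dscale (p`!%:R^-1) (dpow H p))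
            (dscale ((p + 1)`!%:R^-1) (dpow g (p + 1))))
  /\
  (forall r p : nat, (p <= n - r)%N -> (r <= n)%N ->
     dstar (dscale (((n - p - r)`! * p`!)%:R^-1)
                   (dmul (dpow g (n - p - r)) (dpow H p)))
     = dint (dscale (p`!%:R^-1) (dpow H p))
            (dscale ((p + r)`!%:R^-1) (dpow g (p + r)))).
Proof.
move=> g H; split; [|split].
- by move=> p le_pn; apply: dstar_gpow_hpow; rewrite subnK.
- by move=> p le_pn n_gt0; apply: dstar_gpow_hpow; lia.
- by move=> r p le_pnr le_rn; apply: dstar_gpow_hpow; lia.
Qed.
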